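(* Let $n$ be a positive integer and let $F_R(n)$ be the $n\times n$ Fibonacci--Redheffer matrix. If $\lambda_1,\lambda_2,\ldots,\lambda_n$ are the $n$ (not necessarily distinct) eigenvalues of $F_R(n)$, then \[ \det(F_R(n))=\prod_{j=1}^{n}\lambda_j = n!_F\sum_{k=1}^{n}\frac{\mu(k)}{F_k}. \]
   Context: The Fibonacci numbers are $F_1=F_2=1$, $F_n=F_{n-1}+F_{n-2}$ for $n\ge 3$. The Fibonacci--Redheffer matrix $F_R(n)=[F_R(i,j)]_{i,j=1}^n$ is defined by $F_R(i,j)=1$ if $j=1$; $F_R(i,j)=F_i$ if $i\mid j$; and $F_R(i,j)=0$ otherwise (for $i=j=1$ both rules give $1$). The Fibonacci factorial is $n!_F=\prod_{i=1}^n F_i$. $\mu$ denotes the Möbius function: $\mu(1)=1$, $\mu(j)=0$ if $j$ has a repeated prime factor, and $\mu(j)=(-1)^k$ if $j$ is a product of $k$ distinct primes. *)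

From mathcomp Require Import all_boot all_order all_algebra all_field.
Set Implicit Arguments. Unset Strict Implicit. Unset Printing Implicit Defensive.
Import GRing.Theory Num.Theory.
Local Open Scope ring_scope.

Fixpoint fib (n : nat) : nat :=
  match n with
  | 0 => 0
  | 1 => 1
  | (m.+1 as k).+1 => fib k + fib m
  end.

Definition fibfact (n : nat) : nat := \prod_(1 <= i < n.+1) fib i.

(* Moebius function (mobius 0 = 0 by convention; never used at 0). *)
Definition mobius (n : nat) : int :=
  if n == 0%N then 0
  else if all (fun p => logn p n == 1%N) (primes n)
       then (-1) ^+ size (primes n) else 0.

(* Fibonacci--Redheffer matrix; index i : 'I_n stands for i+1. *)
Definition FR (n : nat) : 'M[algC]_n :=
  \matrix_(i < n, j < n)
    (if (j : nat) == 0%N then 1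
     else if (i.+1 %| j.+1)%N then (fib i.+1)%:R else 0).

From mathcomp Require Import all_boot all_order all_algebra all_field.
Set Implicit Arguments.
Unset Strict Implicit.
Unset Printing Implicit Defensive.
Import GRing.Theory Num.Theory.
Local Open Scope ring_scope.

(* Replacing the first row of F_R(n) by \sum_k (F_1 mu(k) / F_k) row_k keeps the determinant,
   as the coefficient of row 1 is mu(1) = 1. Row k carries F_k in every column j > 1 with
   k | j, so by \sum_(k | j) mu(k) = 0 for j > 1 the new row is (F_1 S, 0, ..., 0) with
   S = \sum_k mu(k) / F_k. Expanding along it leaves F_1 S times the minor of the (1,1) entry,
   which is triangular with diagonal F_2, ..., F_n. The product of the eigenvalues is read off
   the constant coefficient of the characteristic polynomial. *)

Lemma mobius1 : mobius 1 = 1. Proof. by []. Qed.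

Lemma mobius_mul_prime_dvd p e : prime p -> (p %| e)%N -> mobius (p * e) = 0.
Proof.
move=> p_pr p_dvd_e; have p_gt0 := prime_gt0 p_pr.
have [->|e_gt0] := posnP e; first by rewrite muln0.
rewrite /mobius muln_eq0 !gtn_eqF //=.
suff /negbTE -> : ~~ all (fun q => logn q (p * e) == 1%N) (primes (p * e)) by [].
apply/allPn; exists p; first by rewrite mem_primes p_pr muln_gt0 p_gt0 e_gt0 dvdn_mulr.
rewrite lognM // logn_prime // eqxx.
have : (0 < logn p e)%N by rewrite logn_gt0 mem_primes p_pr e_gt0.
by case: (logn p e).
Qed.

Lemma mobius_mul_prime p e : prime p -> ~~ (p %| e)%N -> (0 < e)%N ->
  mobius (p * e) = - mobius e.
Proof.
move=> p_pr p_ndvd_e e_gt0; have p_gt0 := prime_gt0 p_pr.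
have p_nprimes : p \notin primes e by rewrite mem_primes p_pr e_gt0.
have primes_pe : perm_eq (primes (p * e)) (p :: primes e).
  apply: uniq_perm; rewrite ?primes_uniq //= ?p_nprimes ?primes_uniq //.
  by move=> q; rewrite primesM // primes_prime // !inE.
rewrite /mobius muln_eq0 !gtn_eqF //= (perm_all _ primes_pe) (perm_size primes_pe) /=.
rewrite lognM // logn_prime // eqxx logn_coprime ?prime_coprime //=.
rewrite (@eq_in_all _ _ (fun q => logn q e == 1%N)); last first.
  move=> q q_in_e; rewrite lognM // logn_prime //.
  by have /negbTE-> : q != p by apply: contraNneq p_nprimes => <-.
by case: all => //; rewrite exprS mulN1r.
Qed.

(* Pair every divisor [d] of [m] with [p * d] for the least prime [p] of [m]:
   either both terms vanish or they cancel. *)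
Lemma sum_mobius_dvd n m : (1 < m)%N -> (m <= n)%N ->
  \sum_(d < n.+1 | (d %| m)%N) mobius d = 0.
Proof.
move=> m_gt1 m_le_n; have m_gt0 := ltnW m_gt1.
have p_pr : prime (pdiv m) := pdiv_prime m_gt1.
have p_dvd_m : (pdiv m %| m)%N := pdiv_dvd m.
set p := pdiv m in p_pr p_dvd_m *; have p_gt0 := prime_gt0 p_pr.
rewrite (bigID (fun d : 'I_n.+1 => (p %| d)%N)) /=.
rewrite (reindex_onto (fun e : 'I_n.+1 => inord (p * e))
          (fun d : 'I_n.+1 => inord (d %/ p))) /=; last first.
  move=> d /andP[_ p_dvd_d]; apply: val_inj => /=.
  rewrite (@inordK n (d %/ p)); last exact: leq_ltn_trans (leq_div d p) (ltn_ord d).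
  by rewrite mulnC divnK // inordK.
rewrite big_mkcond [X in _ + X]big_mkcond -big_split /=.
apply: big1 => e _.
have [pe_small|pe_large] := ltnP (p * e) n.+1.
  rewrite inordK // dvdn_mulr // andbT mulKn // inord_val eqxx andbT.
  have [p_dvd_e|p_ndvd_e] := boolP (p %| e)%N.
    by rewrite mobius_mul_prime_dvd // andbF; case: ifP.
  have e_gt0 : (0 < e)%N by apply: contraNT p_ndvd_e; rewrite -eqn0Ngt => /eqP ->.
  rewrite andbT Gauss_dvd ?prime_coprime // p_dvd_m /=.
  by case: ifP => _; rewrite ?mobius_mul_prime // addNr.
have -> : (inord (p * e) : 'I_n.+1) = ord0.
  by apply: val_inj; rewrite /= /inord /insubd insubF // ltnNge pe_large.
rewrite /= dvd0n gtn_eqF //= add0r; case: ifP => // /andP[e_dvd_m p_ndvd_e].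
have /(dvdn_leq m_gt0) : (p * e %| m)%N by rewrite Gauss_dvd ?prime_coprime // p_dvd_m.
by move=> /leq_trans/(_ m_le_n); rewrite leqNgt pe_large.
Qed.

Lemma fib_gt0 n : (0 < fib n.+1)%N.
Proof. by elim: n => // n IH; rewrite [fib _]/= addn_gt0 IH. Qed.

Lemma det_char_poly_roots (R : comNzRingType) n (A : 'M[R]_n) (lam : 'I_n -> R) :
  char_poly A = \prod_(j < n) ('X - (lam j)%:P) -> \det A = \prod_(j < n) lam j.
Proof.
move=> /(congr1 (fun q : {poly R} => q`_0)).
rewrite char_poly_det -horner_coef0 horner_prod.
under eq_bigr do rewrite hornerD hornerX hornerN hornerC add0r.
by rewrite prodrN card_ord => /(congr1 ( *%R ((-1) ^+ n))); rewrite !signrMK.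
Qed.

Lemma det_row0_comb (R : comNzRingType) n (A : 'M[R]_n.+1) (c : 'rV[R]_n.+1) :
  c 0 0 = 1 -> \det (\matrix_i (if i == 0 then c *m A else row i A)) = \det A.
Proof.
move=> c00.
pose L : 'M[R]_n.+1 := \matrix_i (if i == 0 then c else delta_mx 0 i).
have -> : \matrix_i (if i == 0 then c *m A else row i A) = L *m A.
  by apply/row_matrixP => i; rewrite row_mul !rowK; case: eqP; rewrite // rowE.
rewrite det_mulmx -det_tr det_trig ?big_ord_recl.
  rewrite !mxE /= c00 mul1r big1 ?mul1r // => i _.
  by rewrite !mxE /= !eqxx.
apply/forallP => i; apply/forallP => j; apply/implyP => lt_ij.
have j_neq0 : j != 0 by apply: contraTneq lt_ij => ->.
have /negbTE i_neq_j : i != j by apply: contraTneq lt_ij => ->; rewrite ltnn.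
by rewrite !mxE (negbTE j_neq0) /= mxE i_neq_j andbF.
Qed.

Lemma det_row0_delta (R : comNzRingType) n (A : 'M[R]_n.+1) a :
  row 0 A = a *: delta_mx 0 0 -> \det A = a * \det (row' 0 (col' 0 A)).
Proof.
move=> /rowP row0A; have A0 j : A 0 j = a * (j == 0)%:R.
  by have := row0A j; rewrite !mxE eqxx.
rewrite (expand_det_row _ 0) big_ord_recl big1 => [|j _].
  by rewrite addr0 A0 eqxx mulr1 /cofactor expr0 mul1r.
by rewrite A0 eq_sym (negbTE (neq_lift _ _)) mulr0 mul0r.
Qed.

Section WeightedRedheffer.

Variables (F : fieldType) (f : nat -> F).

Definition redheffer n : 'M[F]_n :=
  \matrix_(i < n, j < n)
    (if (j : nat) == 0%N then 1 else if (i.+1 %| j.+1)%N then f i.+1 else 0).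

Lemma det_redheffer_minor n :
  \det (row' 0 (col' 0 (redheffer n.+1))) = \prod_(i < n) f i.+2.
Proof.
rewrite -det_tr det_trig; last first.
  apply/forallP => i; apply/forallP => j; apply/implyP => lt_ij.
  rewrite !mxE /=; case: ifP => // /(dvdn_leq (ltn0Sn _)).
  by rewrite !ltnS leqNgt lt_ij.
by apply: eq_bigr => i _; rewrite !mxE /= dvdnn.
Qed.

Lemma mobius_row_redheffer n : (forall k : 'I_n.+1, f k.+1 != 0) ->
  (\row_(k < n.+1) ((mobius k.+1)%:~R / f k.+1)) *m redheffer n.+1 =
  (\sum_(k < n.+1) (mobius k.+1)%:~R / f k.+1) *: delta_mx 0 0.
Proof.
move=> f_neq0; apply/rowP => j; rewrite !mxE.
have [->|j_neq0] := eqVneq j 0.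
  by rewrite eqxx mulr1; apply: eq_bigr => k _; rewrite !mxE mulr1.
rewrite andbF mulr0; have j_gt0 : (0 < j)%N by rewrite lt0n.
transitivity ((\sum_(d < n.+2 | (d %| j.+1)%N) mobius d)%:~R : F).
  rewrite rmorph_sum [RHS]big_mkcond [RHS]big_ord_recl /= add0r.
  apply: eq_bigr => k _; rewrite !mxE /= gtn_eqF // /bump add1n.
  by case: ifP => _; rewrite ?mulr0 ?divfK.
by rewrite sum_mobius_dvd // ltnS // ltnW.
Qed.

Lemma det_redheffer n : (forall k : 'I_n.+1, f k.+1 != 0) ->
  \det (redheffer n.+1) =
  (\prod_(i < n.+1) f i.+1) * \sum_(k < n.+1) (mobius k.+1)%:~R / f k.+1.
Proof.
move=> f_neq0; set A := redheffer n.+1; set S := \sum_(k < _) _.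
pose w := \row_(k < n.+1) ((mobius k.+1)%:~R / f k.+1).
have c00 : (f 1 *: w) 0 0 = 1 by rewrite !mxE mobius1 mul1r mulfV ?(f_neq0 0).
pose B := \matrix_i (if i == 0 then f 1 *: w *m A else row i A).
have row0B : row 0 B = (f 1 * S) *: delta_mx 0 0.
  by rewrite rowK eqxx -scalemxAl mobius_row_redheffer // scalerA.
have minorB : row' 0 (col' 0 B) = row' 0 (col' 0 A).
  by apply/matrixP => i j; rewrite !mxE.
rewrite -(det_row0_comb A c00) -/B (det_row0_delta row0B) minorB.
by rewrite det_redheffer_minor big_ord_recl mulrAC.
Qed.

End WeightedRedheffer.

Theorem theorem1 (n : nat) (lam : 'I_n -> algC) :
  (0 < n)%N ->
  char_poly (FR n) = \prod_(j < n) ('X - (lam j)%:P) ->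
  \det (FR n) = \prod_(j < n) lam j /\
  \det (FR n) = (fibfact n)%:R * \sum_(k < n) (mobius k.+1)%:~R / (fib k.+1)%:R.
Proof.
case: n lam => // n lam _ char_lam; split; first exact: det_char_poly_roots char_lam.
have fib_neq0 (k : 'I_n.+1) : (fib k.+1)%:R != 0 :> algC.
  by rewrite pnatr_eq0 -lt0n fib_gt0.
rewrite (_ : FR n.+1 = redheffer (fun i => (fib i)%:R) n.+1) // det_redheffer //.
by rewrite /fibfact big_add1 big_mkord natr_prod.
Qed.
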